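(* Consider the joint regression model described in the context, and let Assumptions (A1)–(A5) hold. Suppose that $(T_1,C_1)$ satisfies the model with parameter vector $(\gamma,\theta)$ and $(T_2,C_2)$ satisfies the model with parameter vector $(\gamma^*,\theta^* )$ (with the same observed covariates $(W,Z)$), and let $Y_j=\min\{T_j,C_j\}$, $\Delta_j=\mathbb{1}(T_j\le C_j)$, $j=1,2$. If $$f_{Y_1,\Delta_1\mid W,Z}(\cdot,k\mid w,z,\gamma;\theta)\equiv f_{Y_2,\Delta_2\mid W,Z}(\cdot,k\mid w,z,\gamma^*;\theta^* )$$ for $k\in\{0,1\}$ and almost every $(w,z)$, then $\gamma=\gamma^*$ and $\theta=\theta^*$.
   Context: Let $m\ge 0$ be an integer. Observed covariates are $\tilde X\in\mathbb{R}^m$, a scalar $Z$ and a scalar instrument $\tilde W$; put $X=(1,\tilde X^\top)^\top$ and $W=(X^\top,\tilde W)^\top\in\mathbb{R}^{m+2}$. Let $\Gamma$ be a parameter set and $(z,w,\gamma)\mapsto g_\gamma(z,w)\in\mathbb{R}$ a known function (the control function). The model with parameter $(\gamma,\theta)$, $\theta=(\beta_T,\alpha_T,\lambda_T,\beta_C,\alpha_C,\lambda_C,\sigma_T,\sigma_C,\rho)$ with $\beta_T,\beta_C\in\mathbb{R}^{m+1}$, $\alpha_T,\lambda_T,\alpha_C,\lambda_C\in\mathbb{R}$, $\sigma_T,\sigma_C>0$, $\rho\in(-1,1)$, is $$T=X^\top\beta_T+Z\alpha_T+V\lambda_T+\epsilon_T,\qquad C=X^\top\beta_C+Z\alpha_C+V\lambda_C+\epsilon_C,\qquad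 V=g_\gamma(Z,W),$$ where $T,C$ are the log survival and log censoring times; one observes $Y=\min\{T,C\}$, $\Delta=\mathbb{1}(T\le C)$, $W$, $Z$. The true parameter is $(\gamma^*,\theta^* )$. Assumptions: (A1) $(\epsilon_T,\epsilon_C)^\top\sim N_2\big(0,\begin{pmatrix}\sigma_T^2&\rho\sigma_T\sigma_C\\ \rho\sigma_T\sigma_C&\sigma_C^2\end{pmatrix}\big)$ with $\sigma_T,\sigma_C>0$, $|\rho|<1$; (A2) $(\epsilon_T,\epsilon_C)$ is independent of $(W,Z)$; (A3) the covariance matrix of $(\tilde X^\top,Z,V)$ is full rank and $\mathrm{Var}(\tilde W)>0$; (A4) $\mathbb{P}(Y=T\mid W,Z)>0$ and $\mathbb{P}(Y=C\mid W,Z)>0$ almost surely; (A5) the true parameter $\gamma^*$ is identified (uniquely determined by the distribution of the observed data). For $w=(x^\top,\tilde w)^\top$, $z$, $y\in\mathbb{R}$, let $b_T=y-x^\top\beta_T-z\alpha_T-g_\gamma(z,w)\lambda_T$ and $b_C=y-x^\top\beta_C-z\alpha_C-g_\gamma(z,w)\lambda_C$. The conditional sub-densities of $(Y,\Delta)$ given $(W,Z)=(w,z)$ under parameter $(\gamma,\theta)$ are $$f_{Y,\Delta\mid W,Z}(y,1\mid w,z,\gamma;\theta)=\frac1{\sigma_T}\Big[1-\Phi\Big(\frac{b_C-\rho\frac{\sigma_C}{\sigma_T}b_T}{\sigma_C(1-\rho^2)^{1/2}}\Big)\Big]\phi\Big(\frac{b_T}{\sigma_T}\Big),$$ $$f_{Y,\Delta\mid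 W,Z}(y,0\mid w,z,\gamma;\theta)=\frac1{\sigma_C}\Big[1-\Phi\Big(\frac{b_T-\rho\frac{\sigma_T}{\sigma_C}b_C}{\sigma_T(1-\rho^2)^{1/2}}\Big)\Big]\phi\Big(\frac{b_C}{\sigma_C}\Big),$$ where $\Phi,\phi$ are the standard normal distribution and density functions. *)

From HB Require Import structures.
From mathcomp Require Import all_boot all_order all_algebra.
From mathcomp Require Import all_classical all_reals all_analysis.
Set Implicit Arguments. Unset Strict Implicit. Unset Printing Implicit Defensive.
Import Order.TTheory GRing.Theory Num.Theory.
Local Open Scope classical_set_scope.
Local Open Scope ring_scope.

Section Model.
Variable R : realType.

Definition std_phi (x : R) : R := normal_pdf 0 1 x.
Definition std_Phi (x : R) : R := fine (normal_prob 0 1 `]-oo, x]).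

Record param (m : nat) := Param {
  betaT : 'rV[R]_m.+1; alphaT : R; lambdaT : R;
  betaC : 'rV[R]_m.+1; alphaC : R; lambdaC : R;
  sigmaT : R; sigmaC : R; rho : R }.

Definition valid_param m (th : param m) : Prop :=
  0 < sigmaT th /\ 0 < sigmaC th /\ -1 < rho th < 1.

(* for w = (x^T, w~)^T in R^(m+2), x^T beta with x the first m+1 entries of w *)
Definition xdot m (w : 'rV[R]_m.+2) (b : 'rV[R]_m.+1) : R :=
  \sum_(i < m.+1) w 0 (widen_ord (leqnSn m.+1) i) * b 0 i.

Section Dens.
Variables (m : nat) (Gamma : Type) (g : Gamma -> R -> 'rV[R]_m.+2 -> R).

Definition bT (ga : Gamma) (th : param m) (w : 'rV[R]_m.+2) (z y : R) : R :=
  y - xdot w (betaT th) - z * alphaT th - g ga z w * lambdaT th.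
Definition bC (ga : Gamma) (th : param m) (w : 'rV[R]_m.+2) (z y : R) : R :=
  y - xdot w (betaC th) - z * alphaC th - g ga z w * lambdaC th.

Definition dens1 ga th w z y : R :=
  let b1 := bT ga th w z y in let b2 := bC ga th w z y in
  (sigmaT th)^-1 *
  (1 - std_Phi ((b2 - rho th * (sigmaC th / sigmaT th) * b1) /
                (sigmaC th * Num.sqrt (1 - rho th ^+ 2)))) *
  std_phi (b1 / sigmaT th).

Definition dens0 ga th w z y : R :=
  let b1 := bT ga th w z y in let b2 := bC ga th w z y in
  (sigmaC th)^-1 *
  (1 - std_Phi ((b1 - rho th * (sigmaT th / sigmaC th) * b2) /
                (sigmaT th * Num.sqrt (1 - rho th ^+ 2)))) *
  std_phi (b2 / sigmaC th).
End Dens.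

Section Covariates.
Variables (d : measure_display) (T : measurableType d) (P : probability T R).
Variables (m : nat) (Xt : T -> 'rV[R]_m) (Z Wt : T -> R).

(* X = (1, X~^T)^T in R^(m+1) *)
Definition Xvec (o : T) : 'rV[R]_m.+1 :=
  \row_(j < m.+1) match unlift ord0 j with Some k => Xt o 0 k | None => 1 end.
(* W = (X^T, W~)^T in R^(m+2) *)
Definition Wvec (o : T) : 'rV[R]_m.+2 :=
  \row_(i < m.+2) match unlift ord_max i with Some j => Xvec o 0 j | None => Wt o end.

Variables (Gamma : Type) (g : Gamma -> R -> 'rV[R]_m.+2 -> R).

Definition same_subdensities (ga : Gamma) (th : param m)
    (ga' : Gamma) (th' : param m) : Prop :=
  {ae P, forall o, forall y : R,
     dens1 g ga th (Wvec o) (Z o) y = dens1 g ga' th' (Wvec o) (Z o) y /\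
     dens0 g ga th (Wvec o) (Z o) y = dens0 g ga' th' (Wvec o) (Z o) y}.

(* the vector (X~^T, Z, V) with V = g_{gamma*}(Z, W), indexed by 'I_(m+2) *)
Definition XZV (gs : Gamma) (i : 'I_(m + 2)) (o : T) : R :=
  match fintype.split i with
  | inl j => Xt o 0 j
  | inr k => if k == ord0 then Z o else g gs (Z o) (Wvec o)
  end.

Definition cov_matrix (U : 'I_(m + 2) -> T -> R) : 'M[R]_(m + 2) :=
  \matrix_(i, j) fine (covariance P (U i) (U j)).

Definition assumption_A3 (gs : Gamma) : Prop :=
  (forall i, measurable_fun setT (XZV gs i) /\
             P.-integrable setT (fun o => ((XZV gs i o) ^+ 2)%:E)) /\
  cov_matrix (XZV gs) \in unitmx /\
  (measurable_fun setT Wt /\ P.-integrable setT (fun o => (Wt o ^+ 2)%:E) /\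
   0 < fine ('V_P[Wt])).

(* (A5): gamma* is uniquely determined by the distribution of the observed
   data (Y, Delta, W, Z): any parameter (ga, th) of the model generating the
   same observed-data distribution has ga = gamma*.  Since the law of (W,Z)
   is fixed, this is equality of the conditional sub-densities a.e. *)
Definition assumption_A5 (gs : Gamma) (ths : param m) : Prop :=
  forall (ga : Gamma) (th : param m), valid_param th ->
    same_subdensities ga th gs ths -> ga = gs.

End Covariates.
End Model.

(* For fixed (w, z) each sub-density has the form s^-1 Q(a y + b) phi((y - mu) / s) with
   Q = 1 - Phi.  Equating two of them gives Q(a y + b) = exp(q(y)) Q(a' y + b') with q quadratic.
   Q is positive, at most 1, nonincreasing and has a Gaussian tail, so in a direction where q
   grows one side would have to exceed 1 or tend to 0 while the other stays bounded below; hence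
   q is constant.  This identifies sigma_T, sigma_C, both slopes (hence rho) and both conditional
   means x^T beta + z alpha + v lambda for almost every (w, z).  Almost sure equality of two such
   linear predictors puts the difference of their coefficients in the kernel of the covariance
   matrix of (X~, Z, V), which is invertible by (A3); gamma = gamma* is (A5). *)

From HB Require Import structures.
From mathcomp Require Import all_boot all_order all_algebra.
From mathcomp Require Import all_classical all_reals all_analysis.
From mathcomp Require Import ring lra.
Import Order.TTheory GRing.Theory Num.Theory measurable_realfun.
Set Implicit Arguments. Unset Strict Implicit. Unset Printing Implicit Defensive.
Local Open Scope classical_set_scope.
Local Open Scope ring_scope.

Section StdNormal.
Variable R : realType.
Local Notation N01 := (normal_prob (0:R) 1).

Lemma normal_prob01_fin_num (A : set R) : measurable A -> N01 A \is a fin_num.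
Proof. by move=> mA; apply: fin_num_measure. Qed.

Lemma std_phiE (x : R) : std_phi x = normal_peak 1 * expR (- (x ^+ 2) / 2).
Proof.
rewrite /std_phi /normal_pdf oner_eq0 /= /normal_fun subr0 expr1n.
by congr (_ * expR (_ / _)); rewrite mulr2n.
Qed.

Lemma normal_prob01_itv_gt0 (x y : R) : x < y -> 0 < fine (N01 `]x, y]).
Proof.
move=> xy; have mI : measurable (`]x, y] : set R) by exact: measurable_itv.
set c := normal_peak (1:R) * expR (- (x ^+ 2 + y ^+ 2) / 2).
have c0 : 0 < c by rewrite mulr_gt0 ?normal_peak_gt0 ?expR_gt0.
suff : ((c * (y - x))%:E <= N01 `]x, y])%E.
  rewrite -(fineK (normal_prob01_fin_num mI)) lee_fin; apply: lt_le_trans.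
  by rewrite mulr_gt0 // subr_gt0.
apply: (@le_trans _ _ (\int[lebesgue_measure]_(u in `]x, y]) (cst c%:E) u)%E).
  have L : lebesgue_measure (`]x, y] : set R) = (y - x)%:E.
    by rewrite lebesgue_measure_itv /= lte_fin xy -EFinD.
  by rewrite integral_cst // EFinM -L.
apply: ge0_le_integral => //.
- by move=> u _; rewrite lee_fin ltW.
- apply/measurable_EFinP; apply: measurable_funTS; exact: measurable_normal_pdf.
move=> u; rewrite /= in_itv /= => /andP[xu uy].
rewrite lee_fin -/(std_phi u) std_phiE ler_pM2l ?normal_peak_gt0 // ler_expR.
have : u ^+ 2 <= x ^+ 2 + y ^+ 2.
  have := sqr_ge0 x; have := sqr_ge0 y.
  have [u0|u0] := leP 0 u.
    have : u ^+ 2 <= y ^+ 2 by rewrite ler_sqr ?nnegrE; lra.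
    lra.
  have : u ^+ 2 <= x ^+ 2 by rewrite -(sqrrN u) -(sqrrN x) ler_sqr ?nnegrE; lra.
  lra.
move: (u ^+ 2) (x ^+ 2 + y ^+ 2) => U V; lra.
Qed.

Lemma std_Phi_ltr : {homo (@std_Phi R) : x y / x < y}.
Proof.
move=> x y xy; rewrite /std_Phi.
have mIx : measurable (`]-oo, x] : set R) by exact: measurable_itv.
have mJ : measurable (`]x, y] : set R) by exact: measurable_itv.
have -> : N01 `]-oo, y] = (N01 `]-oo, x] + N01 `]x, y])%E.
  rewrite (@itv_bndbnd_setU _ _ _ (BRight x)) ?bnd_simp ?ltW //.
  rewrite measureU //.
  by apply/seteqP; split => // u /=; rewrite !in_itv /= => -[ux /andP[xu _]]; lra.
rewrite (fineD (normal_prob01_fin_num mIx) (normal_prob01_fin_num mJ)).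
by rewrite ltrDl normal_prob01_itv_gt0.
Qed.

Lemma std_Phi_mono : {mono (@std_Phi R) : x y / x <= y}.
Proof. exact: (@le_mono _ _ _ _ (@std_Phi R) std_Phi_ltr). Qed.

Definition std_Q (x : R) : R := 1 - std_Phi x.

Lemma std_QE (x : R) : std_Q x = fine (N01 `]x, +oo[).
Proof.
have mI : measurable (`]-oo, x] : set R) by exact: measurable_itv.
rewrite -setCitvl probability_setC // fineB ?normal_prob01_fin_num //.
Qed.

Lemma std_Q_ge0 (x : R) : 0 <= std_Q x.
Proof. by rewrite std_QE fine_ge0 // measure_ge0. Qed.

Lemma std_Q_gt0 (x : R) : 0 < std_Q x.
Proof.
have := @std_Phi_ltr x (x + 1); rewrite ltrDl ltr01 => /(_ isT).
have := std_Q_ge0 (x + 1).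
by rewrite /std_Q; lra.
Qed.

Lemma std_Q_le1 (x : R) : std_Q x <= 1.
Proof. by rewrite /std_Q gerBl /std_Phi fine_ge0 // measure_ge0. Qed.

Lemma std_Q_inj : injective std_Q.
Proof.
move=> x y /addrI/oppr_inj Phixy.
by apply: le_anti; rewrite -[x <= y]std_Phi_mono -[y <= x]std_Phi_mono Phixy lexx.
Qed.

Lemma std_Q_nonincr (x y : R) : x <= y -> std_Q y <= std_Q x.
Proof. by rewrite /std_Q lerD2l lerN2 std_Phi_mono. Qed.

(* Compare phi(u) = e^{-u^2/2}/sqrt(2 pi) with the N(0, 2^2) density e^{-u^2/8}/(2 sqrt(2 pi)):
   the ratio is 2 e^{-3 u^2/8}. *)
Lemma std_Q_le_gauss (x : R) : 0 <= x -> std_Q x <= 2 * expR (- (3/8) * x ^+ 2).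
Proof.
move=> x0; have mI : measurable (`]x, +oo[ : set R) by exact: measurable_itv.
rewrite std_QE -lee_fin fineK ?normal_prob01_fin_num //.
have pdf2 : measurable_fun `]x, +oo[ (normal_pdf (0:R) 2).
  apply: measurable_funTS; exact: measurable_normal_pdf.
apply: (@le_trans _ _ (\int[lebesgue_measure]_(u in `]x, +oo[)
   ((2 * expR (- (3/8) * x ^+ 2)) * normal_pdf 0 2 u)%:E)%E).
  apply: ge0_le_integral => //.
  - by move=> u _; rewrite lee_fin normal_pdf_ge0.
  - apply/measurable_EFinP; apply: measurable_funTS; exact: measurable_normal_pdf.
  - by apply/measurable_EFinP; apply: measurable_funM.
  move=> u; rewrite /= in_itv /= andbT => xu.
  rewrite lee_fin -/(std_phi u) std_phiE /normal_pdf (negbTE (_ : (2:R) != 0)) //=.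
  rewrite /normal_fun subr0 mulrACA -expRD.
  have -> : normal_peak (1:R) = 2 * normal_peak 2.
    rewrite /normal_peak expr1n mul1r -mulrnAr sqrtrM ?sqr_ge0 // sqrtr_sqr.
    by rewrite ger0_norm // invfM mulrA divff ?mul1r.
  rewrite ler_pM2l; last by rewrite mulr_gt0 // normal_peak_gt0.
  rewrite ler_expR (_ : (2:R) ^+ 2 *+ 2 = 8); last by rewrite -mulr_natr expr2 -!natrM.
  have : x ^+ 2 <= u ^+ 2 by rewrite ler_sqr ?nnegrE; lra.
  move: (u ^+ 2) (x ^+ 2) => U X; lra.
under eq_integral do rewrite EFinM.
rewrite ge0_integralZl //; first last.
- by move=> u _; rewrite lee_fin normal_pdf_ge0.
- exact/measurable_EFinP.
rewrite -[X in (_ <= X)%E]mule1; apply: lee_wpmul2l.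
  by rewrite lee_fin mulr_ge0 // expR_ge0.
exact: (@probability_le1 _ _ _ (normal_prob (0:R) 2) _ mI).
Qed.

End StdNormal.

Section StdQRatio.
Variable R : realType.
Implicit Types a b A B C M y : R.

Lemma linear_eventually_gt B C M : 0 < B -> \forall y \near +oo, M < B * y + C.
Proof.
move=> B0; near=> y.
have : (M - C) / B < y by near: y; apply: nbhs_pinfty_gt; rewrite num_real.
by rewrite ltr_pdivrMr // mulrC; lra.
Unshelve. all: by end_near. Qed.

Lemma quadratic_eventually_gt A B C M : 0 < A \/ (A = 0 /\ 0 < B) ->
  \forall y \near +oo, M < A * y ^+ 2 + B * y + C.
Proof.
case=> [A0|[-> B0]]; last first.
  by apply: filterS (linear_eventually_gt C M B0) => y; rewrite mul0r add0r.
near=> y.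
have y0 : 0 <= y by near: y; apply: nbhs_pinfty_ge; rewrite num_real.
have Ay1 : 1 < A * y + B by near: y; exact: linear_eventually_gt.
have : M < 1 * y + C by near: y; exact: linear_eventually_gt.
have : y <= y * (A * y + B) by rewrite ler_peMr // ltW.
by rewrite mulrDr expr2 mul1r mulrCA mulrC; lra.
Unshelve. all: by end_near. Qed.

Lemma std_Q_affine_ge a b y : a <= 0 -> 0 <= y -> std_Q b <= std_Q (a * y + b).
Proof. by move=> a0 y0; apply: std_Q_nonincr; rewrite gerDr mulr_le0_ge0. Qed.

Lemma std_Q_ratio_not_unbounded a b a' b' A B C :
  (forall y, std_Q (a * y + b) = expR (A * y ^+ 2 + B * y + C) * std_Q (a' * y + b')) ->
  a' <= 0 -> 0 < A \/ (A = 0 /\ 0 < B) -> False.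
Proof.
move=> H a'0 AB; have Qb'0 := std_Q_gt0 b'.
suff : \forall y \near +oo_R, False by move=> /filter_ex [].
near=> y.
have y0 : 0 <= y by near: y; apply: nbhs_pinfty_ge; rewrite num_real.
have := std_Q_affine_ge b' a'0 y0.
have : (std_Q b')^-1 < expR (A * y ^+ 2 + B * y + C).
  rewrite -[ltLHS]lnK ?posrE ?invr_gt0 // ltr_expR.
  by near: y; exact: quadratic_eventually_gt.
rewrite -div1r ltr_pdivrMr // => Qb'E Qa'y.
have := std_Q_le1 (a * y + b); rewrite H; apply/negP; rewrite -ltNge.
by apply: (lt_le_trans Qb'E); rewrite ler_pM2l ?expR_gt0.
Unshelve. all: by end_near. Qed.

Lemma std_Q_ratio_not_vanishing a b a' b' B C :
  (forall y, std_Q (a * y + b) = expR (B * y + C) * std_Q (a' * y + b')) ->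
  a <= 0 -> 0 < a' \/ B < 0 -> False.
Proof.
move=> H a0 a'B; have Qb0 := std_Q_gt0 b.
suff : \forall y \near +oo_R, False by move=> /filter_ex [].
have [a'0|B0] := a'B; near=> y;
  have y0 : 0 <= y by near: y; apply: nbhs_pinfty_ge; rewrite num_real.
all: have := std_Q_affine_ge b a0 y0; apply/negP; rewrite -ltNge H.
- have a'y0 : 0 <= a' * y + b'.
    by apply: ltW; near: y; exact: linear_eventually_gt.
  apply: (le_lt_trans (y := expR (B * y + C) * (2 * expR (- (3/8) * (a' * y + b') ^+ 2)))).
    by rewrite ler_pM2l ?expR_gt0 // std_Q_le_gauss.
  (* the Gaussian tail beats the exponential factor *)
  rewrite mulrCA -expRD -ltr_pdivlMl // -[ltRHS]lnK ?posrE ?mulr_gt0 ?invr_gt0 // ltr_expR.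
  rewrite (_ : B * y + C + - (3/8) * (a' * y + b') ^+ 2 =
    - ((3/8 * a' ^+ 2) * y ^+ 2 + (3/4 * a' * b' - B) * y + (3/8 * b' ^+ 2 - C)));
    last by field.
  rewrite ltrNl; near: y; apply: quadratic_eventually_gt; left.
  by rewrite mulr_gt0 // exprn_gt0.
- apply: (le_lt_trans (y := expR (B * y + C))).
    by rewrite -[leRHS]mulr1 ler_pM2l ?expR_gt0 // std_Q_le1.
  rewrite -[ltRHS]lnK ?posrE // ltr_expR -ltrN2 opprD -mulNr.
  by near: y; apply: linear_eventually_gt; rewrite oppr_gt0.
Unshelve. all: by end_near. Qed.

Lemma std_Q_ratio_not_growing a b a' b' A B C :
  (forall y, std_Q (a * y + b) = expR (A * y ^+ 2 + B * y + C) * std_Q (a' * y + b')) ->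
  ~ (0 < A \/ (A = 0 /\ 0 < B)).
Proof.
move=> H AB.
have H_refl y : std_Q (- a * y + b) = expR (A * y ^+ 2 + - B * y + C) * std_Q (- a' * y + b').
  by rewrite !mulNr -!mulrN H sqrrN.
have [a'0|a'0] := leP a' 0; first exact: std_Q_ratio_not_unbounded H a'0 AB.
have [A0|[A0 B0]] := AB.
  by apply: std_Q_ratio_not_unbounded H_refl _ (or_introl A0); rewrite oppr_le0 ltW.
have [a0|a0] := leP a 0.
  have H_lin y : std_Q (a * y + b) = expR (B * y + C) * std_Q (a' * y + b').
    by rewrite H A0 mul0r add0r.
  exact: std_Q_ratio_not_vanishing H_lin a0 (or_introl a'0).
have H_refl_lin y : std_Q (- a * y + b) = expR (- B * y + C) * std_Q (- a' * y + b').
  by rewrite H_refl A0 mul0r add0r.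
apply: std_Q_ratio_not_vanishing H_refl_lin _ _; first by rewrite oppr_le0 ltW.
by right; rewrite oppr_lt0.
Qed.

Lemma std_Q_ratio_expR_const a b a' b' A B C :
  (forall y, std_Q (a * y + b) = expR (A * y ^+ 2 + B * y + C) * std_Q (a' * y + b')) ->
  A = 0 /\ B = 0.
Proof.
move=> H.
have H_swap y : std_Q (a' * y + b') =
    expR (- A * y ^+ 2 + - B * y + - C) * std_Q (a * y + b).
  rewrite H mulrA -expRD.
  rewrite (_ : - A * y ^+ 2 + - B * y + - C + (A * y ^+ 2 + B * y + C) = 0) ?expR0 ?mul1r //.
  by ring.
have := std_Q_ratio_not_growing H; have := std_Q_ratio_not_growing H_swap.
rewrite !oppr_gt0; lra.
Qed.

End StdQRatio.

Section SubdensityFactor.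
Variable R : realType.

Lemma subdensity_factor_inj (s s' m m' a b a' b' : R) : 0 < s -> 0 < s' ->
  (forall y, s^-1 * std_Q (a * y + b) * std_phi ((y - m) / s) =
             s'^-1 * std_Q (a' * y + b') * std_phi ((y - m') / s')) ->
  [/\ s = s', m = m', a = a' & b = b'].
Proof.
move=> s0 s'0 H.
have peak0 : 0 < normal_peak (1 : R) by exact: normal_peak_gt0.
(* dividing the two Gaussian factors leaves the exponential of a quadratic in y *)
set A := 1 / (2 * s ^+ 2) - 1 / (2 * s' ^+ 2).
set B := m' / s' ^+ 2 - m / s ^+ 2.
set C := m ^+ 2 / (2 * s ^+ 2) - m' ^+ 2 / (2 * s' ^+ 2) + ln (s / s').
have H_ratio y :
    std_Q (a * y + b) = expR (A * y ^+ 2 + B * y + C) * std_Q (a' * y + b').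
  have := H y; rewrite !std_phiE.
  set E := expR (- ((y - m) / s) ^+ 2 / 2); set E' := expR (- ((y - m') / s') ^+ 2 / 2).
  have E0 : 0 < E by exact: expR_gt0.
  have -> : expR (A * y ^+ 2 + B * y + C) = s / s' * (E' / E).
    rewrite -expRB -[s / s']lnK ?posrE ?divr_gt0 // -expRD.
    by congr expR; rewrite /A /B /C; field; rewrite ?gt_eqF.
  move=> Hy; rewrite -[LHS](_ : s * (s^-1 * std_Q (a * y + b) * (normal_peak 1 * E)) /
                                 (normal_peak 1 * E) = _); last by field; rewrite ?gt_eqF.
  by rewrite Hy; field; rewrite ?gt_eqF.
have [A0 B0] := std_Q_ratio_expR_const H_ratio.
have ss' : s = s'.
  have : s ^+ 2 = s' ^+ 2.
    move/eqP: A0; rewrite subr_eq0 !div1r => /eqP/invr_inj.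
    by apply: mulfI; rewrite pnatr_eq0.
  by move/eqP; rewrite eqrXn2 ?ltW // => /eqP.
subst s'; have mm' : m = m'.
  apply: (mulIf (_ : (s ^+ 2)^-1 != 0)); first by rewrite invr_eq0 sqrf_eq0 gt_eqF.
  by apply/esym/eqP; rewrite -subr_eq0; apply/eqP.
subst m'; have HQ y : std_Q (a * y + b) = std_Q (a' * y + b').
  have := H_ratio y; rewrite A0 B0 /C subrr add0r divff ?gt_eqF // ln1.
  by rewrite !mul0r !add0r expR0 mul1r.
have bb' := std_Q_inj (HQ 0); rewrite !mulr0 !add0r in bb'.
by split => //; have := std_Q_inj (HQ 1); rewrite !mulr1 bb' => /addIr.
Qed.

Lemma one_sub_sqr_gt0 (t : R) : -1 < t < 1 -> 0 < 1 - t ^+ 2.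
Proof.
move=> /andP[t1 t2]; rewrite (_ : 1 - t ^+ 2 = (1 - t) * (1 + t)); last by ring.
by apply: mulr_gt0; lra.
Qed.

Lemma one_sub_div_sqrt_inj (r r' : R) : -1 < r < 1 -> -1 < r' < 1 ->
  (1 - r) / Num.sqrt (1 - r ^+ 2) = (1 - r') / Num.sqrt (1 - r' ^+ 2) -> r = r'.
Proof.
move=> r11 r'11 /(congr1 (fun x => x ^+ 2)) /=.
rewrite !expr_div_n !sqr_sqrtr ?ltW ?one_sub_sqr_gt0 //.
have E (t : R) : -1 < t < 1 -> (1 - t) ^+ 2 / (1 - t ^+ 2) = 2 * (1 + t)^-1 - 1.
  move=> t11; have := one_sub_sqr_gt0 t11; case/andP: t11 => t1 t2 t0.
  by field; rewrite !gt_eqF //; lra.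
have two0 : (2 : R) != 0 by rewrite pnatr_eq0.
by rewrite !E // => /addIr /(mulfI two0) /invr_inj /addrI.
Qed.

Lemma rho_slopes_inj (u v r r' : R) : 0 < u -> 0 < v -> -1 < r < 1 -> -1 < r' < 1 ->
  (1 - r * (v / u)) / (v * Num.sqrt (1 - r ^+ 2)) =
    (1 - r' * (v / u)) / (v * Num.sqrt (1 - r' ^+ 2)) ->
  (1 - r * (u / v)) / (u * Num.sqrt (1 - r ^+ 2)) =
    (1 - r' * (u / v)) / (u * Num.sqrt (1 - r' ^+ 2)) ->
  r = r'.
Proof.
move=> u0 v0 r11 r'11 eT eC; apply: (one_sub_div_sqrt_inj r11 r'11).
have slopes_sum (t : R) : -1 < t < 1 -> (u + v) * ((1 - t) / Num.sqrt (1 - t ^+ 2)) =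
    u * v * ((1 - t * (v / u)) / (v * Num.sqrt (1 - t ^+ 2)) +
             (1 - t * (u / v)) / (u * Num.sqrt (1 - t ^+ 2))).
  by move=> t11; field; rewrite !gt_eqF ?sqrtr_gt0 ?one_sub_sqr_gt0.
apply: (mulfI (_ : u + v != 0)); first by rewrite gt_eqF ?addr_gt0.
by rewrite !slopes_sum // eT eC.
Qed.

End SubdensityFactor.

Section Subdensities.
Variables (R : realType) (m : nat) (Gamma : Type) (g : Gamma -> R -> 'rV[R]_m.+2 -> R).

Definition lin_pred (w : 'rV[R]_m.+2) (z v : R) (b : 'rV[R]_m.+1) (a l : R) : R :=
  xdot w b + z * a + v * l.

Definition meanT (ga : Gamma) (th : param R m) w z :=
  lin_pred w z (g ga z w) (betaT th) (alphaT th) (lambdaT th).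
Definition meanC (ga : Gamma) (th : param R m) w z :=
  lin_pred w z (g ga z w) (betaC th) (alphaC th) (lambdaC th).

Definition slopeT (th : param R m) :=
  (1 - rho th * (sigmaC th / sigmaT th)) / (sigmaC th * Num.sqrt (1 - rho th ^+ 2)).
Definition slopeC (th : param R m) :=
  (1 - rho th * (sigmaT th / sigmaC th)) / (sigmaT th * Num.sqrt (1 - rho th ^+ 2)).

Lemma dens1E ga th w z : dens1 g ga th w z = fun y =>
  (sigmaT th)^-1 * std_Q (slopeT th * y +
     (rho th * (sigmaC th / sigmaT th) * meanT ga th w z - meanC ga th w z) /
       (sigmaC th * Num.sqrt (1 - rho th ^+ 2))) *
  std_phi ((y - meanT ga th w z) / sigmaT th).
Proof.
apply: boolp.funext => y; rewrite /dens1 /bT /bC /std_Q /slopeT /meanT /meanC /lin_pred.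
by congr (_ * (1 - std_Phi _) * std_phi _); ring.
Qed.

Lemma dens0E ga th w z : dens0 g ga th w z = fun y =>
  (sigmaC th)^-1 * std_Q (slopeC th * y +
     (rho th * (sigmaT th / sigmaC th) * meanC ga th w z - meanT ga th w z) /
       (sigmaT th * Num.sqrt (1 - rho th ^+ 2))) *
  std_phi ((y - meanC ga th w z) / sigmaC th).
Proof.
apply: boolp.funext => y; rewrite /dens0 /bT /bC /std_Q /slopeC /meanT /meanC /lin_pred.
by congr (_ * (1 - std_Phi _) * std_phi _); ring.
Qed.

Lemma subdensities_inj (ga : Gamma) (th th' : param R m) w z :
  valid_param th -> valid_param th' ->
  (forall y, dens1 g ga th w z y = dens1 g ga th' w z y /\
             dens0 g ga th w z y = dens0 g ga th' w z y) ->
  [/\ sigmaT th = sigmaT th', sigmaC th = sigmaC th', rho th = rho th',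
      meanT ga th w z = meanT ga th' w z & meanC ga th w z = meanC ga th' w z].
Proof.
move=> [sT [sC rr]] [sT' [sC' rr']] same; rewrite !dens1E !dens0E /= in same.
have [eT mT aT _] := subdensity_factor_inj sT sT' (fun y => (same y).1).
have [eC mC aC _] := subdensity_factor_inj sC sC' (fun y => (same y).2).
split => //; move: aT aC; rewrite /slopeT /slopeC -eT -eC; exact: rho_slopes_inj.
Qed.

End Subdensities.

Lemma sqr_integrable_Lfun2 d (T : measurableType d) (R : realType)
    (mu : {measure set T -> \bar R}) (f : T -> R) :
  measurable_fun setT f -> mu.-integrable setT (fun o => (f o ^+ 2)%:E) ->
  f \in Lfun mu 2%:E.
Proof.
move=> mf /integrableP[_ fi]; rewrite inE; apply/andP; split; first by rewrite inE.
rewrite inE /= /finite_norm.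
have two0 : (2 : R) != 0 by rewrite pnatr_eq0.
have := poweR_Lnorm mu (EFin \o f) two0.
have -> : (\int[mu]_x (`|(EFin \o f) x| `^ 2)%E = \int[mu]_x (f x ^+ 2)%:E)%E.
  by apply: eq_integral => x _ /=; rewrite powR_mulrn ?normr_ge0 // real_normK // num_real.
have fin : (\int[mu]_x (f x ^+ 2)%:E < +oo)%E.
  by move: fi; under eq_integral => x _ do rewrite gee0_abs ?lee_fin ?sqr_ge0 //.
move: (Lnorm_ge0 mu 2%:E (EFin \o f)).
case: ('N[mu]_2[EFin \o f])%E => [r _ _| |] //=; first exact: ltry.
by move=> _ E; move: fin; rewrite -E (negbTE two0).
Qed.

Section Covariance.
Variables (d : measure_display) (T : measurableType d) (R : realType) (P : probability T R).

Lemma ae_probability_ex (Q : T -> Prop) : {ae P, forall o, Q o} -> exists o, Q o.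
Proof.
apply: filter_ex; apply: ae_properfilter_algebraOfSetsType.
apply: (@lt_le_trans _ _ 1%E); first exact: lte01.
by rewrite le_eqVlt (esym (probability_setT P)) eqxx.
Qed.

Lemma covariance_ae_cst (X Y : T -> R) (c : R) :
  measurable_fun setT X -> measurable_fun setT Y ->
  {ae P, forall o, Y o = c} -> covariance P X Y = 0%E.
Proof.
move=> mX mY Yc.
have EY : expectation P Y = c%:E.
  rewrite -(expectation_cst P c) unlock; apply: ae_eq_integral => //.
  - exact/measurable_EFinP.
  - exact/measurable_EFinP.
  - by apply: filterS Yc => o /= -> _.
rewrite unlock EY /= unlock (ae_eq_integral (cst 0%E)) ?integral0 //.
- apply/measurable_EFinP; apply: measurable_funM; exact: measurable_funB.
- by apply: filterS Yc => o /= Yo _; rewrite /GRing.mul /= Yo subrr mulr0.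
Qed.

Lemma covariance_sumr n (U : 'I_n -> T -> R) (v : 'I_n -> R) (X : T -> R) :
  X \in Lfun P 2%:E -> (forall j, U j \in Lfun P 2%:E) ->
  forall r : seq 'I_n,
  (fun o => \sum_(j <- r) v j * U j o) \in Lfun P 2%:E /\
  covariance P X (fun o => \sum_(j <- r) v j * U j o) =
    (\sum_(j <- r) v j * fine (covariance P X (U j)))%:E.
Proof.
move=> X2 U2; elim => [|j r [IH2 IHcov]].
  under eq_fun do rewrite big_nil.
  by rewrite big_nil covariance_cst_r; split => //; exact: Lfun_cst.
have -> : (fun o => \sum_(i <- j :: r) v i * U i o) =
    ((v j \o* U j) \+ (fun o => \sum_(i <- r) v i * U i o)).
  by apply: boolp.funext => o; rewrite big_cons /= mulrC.
have Pfin : P setT \is a fin_num := fin_num_measure P _ measurableT.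
have vU2 : (v j \o* U j) \in Lfun P 2%:E by apply: Lfun_scale => //; rewrite ler1n.
have p12 : (1 <= 2%:E :> \bar R)%E by rewrite lee_fin ler1n.
split; first exact: ((@Lfun_addr_closed _ _ _ P 2%:E p12).2 _ _ vU2 IH2).
have X1 := Lfun_subset12 Pfin X2; have U1 := Lfun_subset12 Pfin (U2 j).
have XU1 := Lfun2_mul_Lfun1 X2 (U2 j).
rewrite covarianceDr // covarianceZr // IHcov big_cons.
by rewrite -[covariance P X (U j)]fineK ?covariance_fin_num // -EFinM -EFinD.
Qed.

Lemma cov_matrix_mulmx_ae_cst n (U : 'I_n -> T -> R) (v : 'cV[R]_n) (c : R) :
  (forall i, U i \in Lfun P 2%:E) ->
  {ae P, forall o, \sum_j v j 0 * U j o = c} ->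
  (\matrix_(i, j) fine (covariance P (U i) (U j))) *m v = 0.
Proof.
move=> U2 Uc; apply/matrixP => i k; rewrite !mxE (ord1 k).
have [sum2 cov_sum] := covariance_sumr (fun j => v j 0) (U2 i) U2 (index_enum 'I_n).
have mfun2 (f : T -> R) : f \in Lfun P 2%:E -> measurable_fun setT f.
  by rewrite inE => /andP[]; rewrite inE.
have := covariance_ae_cst (mfun2 _ (U2 i)) (mfun2 _ sum2) Uc.
rewrite cov_sum => /(congr1 fine) /= cov0; rewrite -[RHS]cov0.
by apply: eq_bigr => j _; rewrite mxE mulrC.
Qed.

End Covariance.

Section LinearPredictor.
Variables (R : realType) (d : measure_display) (T : measurableType d) (P : probability T R).
Variables (m : nat) (Xt : T -> 'rV[R]_m) (Z Wt : T -> R).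
Variables (Gamma : Type) (g : Gamma -> R -> 'rV[R]_m.+2 -> R) (gs : Gamma).

Local Notation W := (Wvec Xt Wt).
Local Notation V o := (g gs (Z o) (W o)).

(* coefficients of (X~, Z, V) in x^T b + z a + v l, without the intercept b_0 *)
Definition xzv_coef (b : 'rV[R]_m.+1) (a l : R) (i : 'I_(m + 2)) : R :=
  match fintype.split i with
  | inl j => b 0 (lift ord0 j)
  | inr k => if k == ord0 then a else l
  end.

Lemma lin_pred_XZV o b a l : lin_pred (W o) (Z o) (V o) b a l =
  b 0 ord0 + \sum_i xzv_coef b a l i * XZV Xt Z Wt g gs i o.
Proof.
have W_X (i : 'I_m.+1) : W o 0 (widen_ord (leqnSn m.+1) i) = Xvec Xt o 0 i.
  rewrite /Wvec mxE (_ : widen_ord _ i = lift ord_max i) ?liftK //.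
  by apply: val_inj; rewrite [RHS]lift_max.
rewrite /lin_pred /xdot; under eq_bigr do rewrite W_X.
rewrite big_ord_recl /Xvec mxE unlift_none mul1r; under eq_bigr do rewrite mxE liftK.
rewrite big_split_ord /= big_ord_recl big_ord1.
under [X in _ = _ + (X + _)]eq_bigr do rewrite /xzv_coef /XZV (unsplitK (inl _)) mulrC.
rewrite /xzv_coef /XZV !(unsplitK (inr _)) /=; ring.
Qed.

Lemma xzv_coef_inj (b b' : 'rV[R]_m.+1) (a a' l l' : R) : b 0 ord0 = b' 0 ord0 ->
  xzv_coef b a l =1 xzv_coef b' a' l' -> [/\ b = b', a = a' & l = l'].
Proof.
move=> b0 coef_eq; split.
- apply/rowP => i; case: (unliftP ord0 i) => [j ->|-> //].
  by have := coef_eq (lshift 2 j); rewrite /xzv_coef (unsplitK (inl _)).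
- by have := coef_eq (rshift m ord0); rewrite /xzv_coef (unsplitK (inr _)) eqxx.
- have := coef_eq (rshift m (lift ord0 ord0)); rewrite /xzv_coef (unsplitK (inr _)).
  by rewrite (_ : (lift ord0 ord0 == ord0 :> 'I_2) = false).
Qed.

Lemma lin_pred_ae_inj (b b' : 'rV[R]_m.+1) (a a' l l' : R) : assumption_A3 P Xt Z Wt g gs ->
  {ae P, forall o, lin_pred (W o) (Z o) (V o) b a l = lin_pred (W o) (Z o) (V o) b' a' l'} ->
  [/\ b = b', a = a' & l = l'].
Proof.
move=> [XZV2 [cov_unit _]] same.
set v : 'cV[R]_(m + 2) := \col_i (xzv_coef b a l i - xzv_coef b' a' l' i).
have v_cst : {ae P, forall o, \sum_j v j 0 * XZV Xt Z Wt g gs j o = b' 0 ord0 - b 0 ord0}.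
  apply: filterS same => o; rewrite !lin_pred_XZV => eq_o.
  under eq_bigr do rewrite mxE mulrBl.
  by rewrite sumrB; lra.
have XZV_Lfun2 i : XZV Xt Z Wt g gs i \in Lfun P 2%:E.
  by apply: sqr_integrable_Lfun2; [exact: (XZV2 i).1 | exact: (XZV2 i).2].
have v0 : v = 0.
  by rewrite -(mulKmx cov_unit v) (cov_matrix_mulmx_ae_cst XZV_Lfun2 v_cst) mulmx0.
have [x] := ae_probability_ex v_cst; rewrite v0.
under eq_bigr do rewrite mxE mul0r.
rewrite big1_eq => /eqP; rewrite eq_sym subr_eq0 => /eqP b0.
apply: xzv_coef_inj => // i; apply/eqP; rewrite -subr_eq0.
by have := congr1 (fun M : 'cV[R]_(m + 2) => M i 0) v0; rewrite !mxE => ->.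
Qed.

End LinearPredictor.

Unset Implicit Arguments.

Theorem theorem1 (R : realType) (d : measure_display) (T : measurableType d)
    (P : probability T R) (m : nat)
    (Xt : T -> 'rV[R]_m) (Z Wt : T -> R)
    (Gamma : Type) (g : Gamma -> R -> 'rV[R]_m.+2 -> R)
    (ga gs : Gamma) (th ths : param R m) :
  valid_param th -> valid_param ths ->
  assumption_A3 P Xt Z Wt g gs ->
  assumption_A5 P Xt Z Wt g gs ths ->
  same_subdensities P Xt Z Wt g ga th gs ths ->
  ga = gs /\ th = ths.
Proof.
move=> vth vths A3 A5 same; have ga_gs := A5 ga th vth same; subst ga; split => //.
have [x /(subdensities_inj vth vths)[eT eC er _ _]] := ae_probability_ex same.
have meansT : {ae P, forall o,
    meanT g gs th (Wvec Xt Wt o) (Z o) = meanT g gs ths (Wvec Xt Wt o) (Z o)}.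
  by apply: filterS same => o /(subdensities_inj vth vths)[].
have meansC : {ae P, forall o,
    meanC g gs th (Wvec Xt Wt o) (Z o) = meanC g gs ths (Wvec Xt Wt o) (Z o)}.
  by apply: filterS same => o /(subdensities_inj vth vths)[].
have [bT aT lT] := lin_pred_ae_inj A3 meansT.
have [bC aC lC] := lin_pred_ae_inj A3 meansC.
move: eT eC er bT aT lT bC aC lC.
case: th ths {vth vths A5 same meansT meansC} => [? ? ? ? ? ? ? ? ?] [? ? ? ? ? ? ? ? ?] /=.
by move=> -> -> -> -> -> -> -> -> ->.
Qed.
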